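(* Let $\kappa$ be an integrable kernel on a type space $(\mathcal S,\mu)$ with $\mu(\mathcal S)=1$. Then $\hat\chi(\kappa)=\sum_{j=0}^\infty\langle\hat T_\kappa^j1,1\rangle_{\hat\mu}=\hat\mu(\mathcal S)\chi(\hat\kappa)=(1-\rho(\kappa))\chi(\hat\kappa)$.
   Context: A kernel is a symmetric measurable $\kappa:\mathcal S^2\to[0,\infty)$ with $\int_{\mathcal S^2}\kappa<\infty$ and $\int\kappa(x,y)d\mu(y)<\infty$ for every $x$. For a kernel $\kappa$ on a measure space $(\mathcal S,\nu)$ with $0<\nu(\mathcal S)<\infty$, the branching process $\mathfrak X_\kappa(x)$ starts with one particle of type $x$, each particle of type $y$ independently having children whose types form a Poisson process with intensity $\kappa(y,z)\,d\nu(z)$; $\chi(\kappa)=\nu(\mathcal S)^{-1}\int\mathbb E|\mathfrak X_\kappa(x)|\,d\nu(x)$. For $\kappa$ on $(\mathcal S,\mu)$: $\rho(\kappa;x)=\mathbb P(|\mathfrak X_\kappa(x)|=\infty)$, $\rho(\kappa)=\int\rho(\kappa;x)d\mu(x)$, $\hat\chi(\kappa)=\int\mathbb E(|\mathfrak X_\kappa(x)|;|\mathfrak X_\kappa(x)|<\infty)d\mu(x)$. $\hat\mu$ is the measure $d\hat\mu=(1-\rho(\kappa;x))d\mu(x)$; the dual kernel $\hat\kappa$ is the kernel on $(\mathcal S,\hat\mu)$ equal to $\kappa$ as a function, and $\hat T_\kappa f(x)=\int\kappa(x,y)f(y)\,d\hat\mu(y)$ is its integral operator. $\langle f,g\rangle_{\hat\mu}=\int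 fg\,d\hat\mu$; $1$ is the constant function. *)

From HB Require Import structures.
From mathcomp Require Import all_boot all_order all_algebra.
From mathcomp Require Import all_classical all_reals all_analysis.
Set Implicit Arguments. Unset Strict Implicit. Unset Printing Implicit Defensive.
Import Order.TTheory GRing.Theory Num.Theory.
Import numFieldNormedType.Exports.
Local Open Scope classical_set_scope.
Local Open Scope ring_scope.

(* The branching process "with kernel kap on the type
   space (S, w mu)" is the Poisson multi-type Galton--Watson process in which
   a particle of type y has children whose types form a Poisson process with
   intensity kap(y,z) w(z) dmu(z).  For the original process w = 1; for the
   dual kernel on (S, hat mu), w = 1 - rho(kap; .). *)

Section BranchingProcess.
Context {R : realType} {d : measure_display} {S : measurableType d}.
Variables (mu : {measure set S -> \bar R}) (kap : S -> S -> R) (w : S -> R).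

Definition bp_lam (x : S) : R := Rintegral mu setT (fun y => kap x y * w y).

Fixpoint conv_pow (a : nat -> R) (m : nat) : nat -> R :=
  match m with
  | 0 => fun j => (j == 0)%:R
  | m'.+1 => fun j => \sum_(i < j.+1) a i * conv_pow a m' (j - i)%N
  end.

(* bp_trunc n x k = P(Y_n(x) = k), where Y_n(x) is the number of particles
   in generations 0..n of the branching process started from one particle
   of type x.  Y_0 = 1 and Y_(n+1)(x) = 1 + sum over the children c of the
   root of independent copies of Y_n(type c): a compound Poisson law.  (The
   sum over the number m of children may be cut at m <= j because
   P(Y_n = 0) = 0.) *)
Fixpoint bp_trunc (n : nat) : S -> nat -> R :=
  match n with
  | 0 => fun _ k => (k == 1)%:R
  | n'.+1 => fun x k =>
      match k with
      | 0 => 0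
      | j.+1 =>
          \sum_(m < j.+1)
            (expR (- bp_lam x) / (m`!)%:R *
             conv_pow (fun i => Rintegral mu setT
                                  (fun y => kap x y * w y * bp_trunc n' y i))
                      m j)
      end
  end.

(* P(|X(x)| = k) for finite k: since Y_n increases to |X|, this is the limit
   of P(Y_n(x) = k). *)
Definition bp_size_pmf (x : S) (k : nat) : R := limn (fun n => bp_trunc n x k).

Definition bp_finite_prob (x : S) : \bar R :=
  (\sum_(0 <= k <oo) (bp_size_pmf x k)%:E)%E.

Definition bp_rho (x : S) : R := 1 - fine (bp_finite_prob x).

Definition bp_Efin (x : S) : \bar R :=
  (\sum_(0 <= k <oo) ((k%:R * bp_size_pmf x k)%:E))%E.

Definition bp_E (x : S) : \bar R :=
  (bp_Efin x + (if bp_rho x == 0%R then 0 else +oo))%E.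

Definition bp_chi : \bar R :=
  (((fine (\int[mu]_x (w x)%:E))^-1)%:E * \int[mu]_x ((w x)%:E * bp_E x))%E.

End BranchingProcess.

Section Dual.
Context {R : realType} {d : measure_display} {S : measurableType d}.
Variables (mu : {measure set S -> \bar R}) (kap : S -> S -> R).

Definition one_fun : S -> R := fun _ => 1.

Definition rho_x (x : S) : R := bp_rho mu kap one_fun x.
Definition rho_tot : \bar R := (\int[mu]_x (rho_x x)%:E)%E.
Definition chi_hat : \bar R := (\int[mu]_x bp_Efin mu kap one_fun x)%E.

(* density of hat mu w.r.t. mu *)
Definition hat_w (x : S) : R := 1 - rho_x x.
Definition hat_mu_S : \bar R := (\int[mu]_x (hat_w x)%:E)%E.

Fixpoint hatT_pow (j : nat) : S -> \bar R :=
  match j with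
  | 0 => fun _ => 1%E
  | j'.+1 => fun x => (\int[mu]_y ((kap x y)%:E * hatT_pow j' y * (hat_w y)%:E))%E
  end.

Definition hat_inner (f g : S -> \bar R) : \bar R :=
  (\int[mu]_x (f x * g x * (hat_w x)%:E))%E.

(* chi(hat kap): the dual kernel is kap on (S, hat mu) *)
Definition chi_dual : \bar R := bp_chi mu kap hat_w.

End Dual.

(* Write [q x = P(|X(x)| < oo) = 1 - rho(kap; x)]. The law of the total
   progeny [|X(x)|] is the limit of the laws of the sizes [Y_n(x)] of the first
   [n] generations, which obey compound Poisson recursions. These give the
   fixed-point equation [q = exp (- T_kap (1 - q))], and with it the identity
   [P(|X(x)| = k) = q x * P(|hat X(x)| = k)]: conditioned on extinction, the
   process is the branching process of the dual kernel, i.e. of [kap] on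
   [(S, q mu)]. That process is almost surely finite, so its mean size solves
   [M = 1 + hat T_kap M]; iterating gives [M >= \sum_j hat T_kap^j 1], and
   the truncations [Y_n] give the reverse inequality. Integrating
   [E(|X(x)|; |X(x)| < oo) = q x * M x] against [mu] yields all three
   expressions of [hat chi(kap)]. *)

From Pilot Require Import Defs.
From HB Require Import structures.
From mathcomp Require Import all_boot all_order all_algebra.
From mathcomp Require Import all_classical all_reals all_analysis.
From mathcomp Require Import measurable_realfun ring.
Import Order.TTheory GRing.Theory Num.Theory.
Import numFieldNormedType.Exports.
Local Open Scope classical_set_scope.
Local Open Scope ring_scope.

Section NonnegSeries.
Context {R : realType}.
Local Open Scope ereal_scope.

Lemma nneseries_ge_term (f : nat -> \bar R) k : (forall i, 0 <= f i) ->
  f k <= \sum_(i <oo) f i.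
Proof.
move=> f0; apply: (le_trans _ (nneseries_lim_ge k.+1 (fun n _ _ => f0 n))).
by rewrite big_nat_recr//= leeDr// sume_ge0.
Qed.

Lemma nneseries_truncate (f : nat -> \bar R) n : (forall i, 0 <= f i) ->
  (forall i, (n <= i)%N -> f i = 0) -> \sum_(i <oo) f i = \sum_(i < n) f i.
Proof.
move=> f0 fn; rewrite (nneseries_split _ n)// add0n.
by rewrite eseries0 ?adde0 ?big_mkord// => i ni _; exact: fn.
Qed.

Lemma nneseriesMr (f : nat -> \bar R) B : (forall i, 0 <= f i) -> 0 <= B ->
  \sum_(i <oo) (f i * B) = (\sum_(i <oo) f i) * B.
Proof.
move=> f0; case: B => [b| |]// b0.
  by under eq_eseriesr do rewrite muleC; rewrite nneseriesZl// muleC.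
have [fz|/existsNP[k fk]] := pselect (forall i, f i = 0).
  rewrite eseries0; last by move=> i _ _; rewrite fz mul0e.
  by rewrite eseries0 ?mul0e// => i _ _; rewrite fz.
have fk0 : 0 < f k by rewrite lt0e f0 andbT; apply/eqP.
have -> : \sum_(i <oo) f i * +oo = +oo.
  apply/eqP; rewrite eq_le leey/=; apply: (@le_trans _ _ (f k * +oo)).
    by rewrite muleC gt0_mulye.
  by apply: (nneseries_ge_term (fun i => f i * +oo)) => i; rewrite mule_ge0.
by rewrite muleC gt0_mulye// (lt_le_trans fk0)// nneseries_ge_term.
Qed.

Lemma nneseries_shift (f : nat -> \bar R) : (forall i, 0 <= f i) -> f 0%N = 0 ->
  \sum_(i <oo) f i = \sum_(i <oo) f i.+1.
Proof.
move=> f0 f00; rewrite nneseries_recl// f00 add0e.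
by rewrite -(nneseries_addn 1)//; under eq_eseriesr do rewrite addn1.
Qed.

Lemma nneseries_antidiagonal (f : nat -> nat -> R) :
  (forall i k, (0 <= f i k)%R) ->
  \sum_(j <oo) (\sum_(i < j.+1) f i (j - i)%N)%:E =
  \sum_(i <oo) \sum_(k <oo) (f i k)%:E.
Proof.
move=> f0; pose g i j := if (i <= j)%N then (f i (j - i)%N)%:E else 0.
have g0 i j : 0 <= g i j by rewrite /g; case: ifP => // _; rewrite lee_fin.
transitivity (\sum_(j <oo) \sum_(i <oo) g i j).
  apply: eq_eseriesr => j _; rewrite -sumEFin (nneseries_truncate _ j.+1)//.
  - by apply: eq_bigr => i _; rewrite /g -ltnS ltn_ord.
  - by move=> i ji; rewrite /g leqNgt ji.
rewrite nneseries_interchange//; apply: eq_eseriesr => i _.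
rewrite (nneseries_split 0 i (fun k _ => g0 i k)) add0n big_nat big1 ?add0e.
  by rewrite -nneseries_addn//; apply: eq_eseriesr => k _; rewrite /g leq_addl addnK.
by move=> j /= ji; rewrite /g leqNgt ji.
Qed.

Lemma nneseries_cauchy_product (a c : nat -> R) : (forall i, (0 <= a i)%R) ->
  (forall i, (0 <= c i)%R) ->
  \sum_(j <oo) (\sum_(i < j.+1) a i * c (j - i)%N)%:E =
  (\sum_(i <oo) (a i)%:E) * (\sum_(k <oo) (c k)%:E).
Proof.
move=> a0 c0; rewrite (nneseries_antidiagonal (fun i k => a i * c k)%R); last first.
  by move=> i k; rewrite mulr_ge0.
rewrite -nneseriesMr; last 2 first.
- by move=> i; rewrite lee_fin.
- by apply: nneseries_ge0 => i _ _; rewrite lee_fin.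
apply: eq_eseriesr => i _; under eq_eseriesr do rewrite EFinM.
by rewrite nneseriesZl// => k _; rewrite lee_fin.
Qed.

(* The weight [j] of the product term [a i * c (j - i)] splits as [i + (j - i)]. *)
Lemma nneseries_cauchy_product_mean (a c : nat -> R) :
  (forall i, (0 <= a i)%R) -> (forall i, (0 <= c i)%R) ->
  \sum_(j <oo) (j%:R * \sum_(i < j.+1) a i * c (j - i)%N)%:E =
  (\sum_(i <oo) (i%:R * a i)%:E) * (\sum_(k <oo) (c k)%:E) +
  (\sum_(i <oo) (a i)%:E) * (\sum_(k <oo) (k%:R * c k)%:E).
Proof.
move=> a0 c0.
have ser0 (u : nat -> R) : (forall k, (0 <= u k)%R) -> 0 <= \sum_(k <oo) (u k)%:E.
  by move=> u0; apply: nneseries_ge0 => k _ _; rewrite lee_fin.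
transitivity (\sum_(j <oo) (\sum_(i < j.+1) ((i%:R * a i) * c (j - i)%N +
                a i * ((j - i)%N%:R * c (j - i)%N))%R)%:E).
  apply: eq_eseriesr => j _; congr EFin; rewrite mulr_sumr; apply: eq_bigr => i _.
  have ij : (i <= j)%N by rewrite -ltnS ltn_ord.
  by rewrite -{1}(subnKC ij) natrD; ring.
rewrite (nneseries_antidiagonal
  (fun i k => (i%:R * a i) * c k + a i * (k%:R * c k))%R); last first.
  by move=> i k; rewrite addr_ge0// ?mulr_ge0.
transitivity (\sum_(i <oo) ((i%:R * a i)%:E * \sum_(k <oo) (c k)%:E +
                           (a i)%:E * \sum_(k <oo) (k%:R * c k)%:E)).
  apply: eq_eseriesr => i _; under eq_eseriesr do rewrite EFinD.
  rewrite nneseriesD; last 2 first.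
  - by move=> k _ _; rewrite lee_fin !mulr_ge0.
  - by move=> k _ _; rewrite lee_fin !mulr_ge0.
  under eq_eseriesr do rewrite EFinM.
  rewrite nneseriesZl; last by move=> k _; rewrite lee_fin.
  congr (_ + _); under eq_eseriesr do rewrite EFinM.
  by rewrite nneseriesZl// => k _; rewrite lee_fin mulr_ge0.
rewrite nneseriesD; last 2 first.
- by move=> i _ _; rewrite mule_ge0 ?lee_fin ?mulr_ge0 ?ser0.
- by move=> i _ _; rewrite mule_ge0 ?lee_fin ?ser0// => k; rewrite mulr_ge0.
by rewrite !nneseriesMr ?ser0 => // *; rewrite ?lee_fin ?mulr_ge0.
Qed.

Lemma expR_eseries (x : R) :
  \sum_(m <oo) ((x ^+ m) / (m`!)%:R)%:E = (expR x)%:E.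
Proof.
rewrite expRE -EFin_lim; last first.
  rewrite /pseries/=; under eq_fun do rewrite mulrC.
  exact: is_cvg_series_exp_coeff.
apply/congr_lim/funext => n/=; rewrite /pseries/= /series/= -sumEFin//.
by apply: eq_bigr => m _; rewrite mulrC.
Qed.

End NonnegSeries.

Section ConvolutionPowers.
Context {R : realType}.
Implicit Types (a b : nat -> R).

Lemma conv_pow_ge0 a m j : (forall i, 0 <= a i) -> 0 <= conv_pow a m j.
Proof.
move=> a0; elim: m j => [|m IH] j /=; first by rewrite ler0n.
by apply: sumr_ge0 => i _; rewrite mulr_ge0.
Qed.

Lemma eq_conv_pow a b m j : (forall i, (i <= j)%N -> a i = b i) ->
  conv_pow a m j = conv_pow b m j.
Proof.
elim: m j => [|m IH] j ab //=; apply: eq_bigr => i _.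
have ij : (i <= j)%N by rewrite -ltnS ltn_ord.
rewrite ab// (IH (j - i)%N)// => k kj; apply: ab.
exact: leq_trans kj (leq_subr _ _).
Qed.

Lemma conv_pow_eq0 a m j : a 0%N = 0 -> (j < m)%N -> conv_pow a m j = 0.
Proof.
move=> a00; elim: m j => [|m IH] j //= jm; apply: big1 => i _.
have [->|i0] := posnP i; first by rewrite a00 mul0r.
rewrite IH ?mulr0//; rewrite ltnS in jm.
by rewrite (leq_trans _ jm)// ltn_subrL i0 (leq_trans i0)// -ltnS ltn_ord.
Qed.

Lemma conv_pow1 a j : conv_pow a 1 j = a j.
Proof.
rewrite /= big_ord_recr/= subnn eqxx mulr1 big1 ?add0r// => i _.
by rewrite subn_eq0 leqNgt ltn_ord mulr0.
Qed.

Local Open Scope ereal_scope.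

Lemma nneseries_conv_pow a A m : (forall i, (0 <= a i)%R) ->
  \sum_(i <oo) (a i)%:E = A%:E ->
  \sum_(j <oo) (conv_pow a m j)%:E = (A ^+ m)%:E.
Proof.
move=> a0 aA; elim: m => [|m IH].
  rewrite (nneseries_truncate _ 1).
  - by rewrite big_ord1 /= expr0.
  - by move=> i; rewrite lee_fin conv_pow_ge0.
  - by move=> i i1; rewrite /= eqn0Ngt i1.
rewrite [LHS](nneseries_cauchy_product a (conv_pow a m))// ?aA ?IH.
  by rewrite -EFinM exprS.
by move=> i; exact: conv_pow_ge0.
Qed.

Lemma nneseries_mean_conv_pow a A m : (forall i, (0 <= a i)%R) ->
  \sum_(i <oo) (a i)%:E = A%:E ->
  \sum_(j <oo) (j%:R * conv_pow a m.+1 j)%:E =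
  (m.+1%:R * A ^+ m)%:E * \sum_(i <oo) (i%:R * a i)%:E.
Proof.
move=> a0 aA.
have A0 : (0 <= A)%R.
  by rewrite -lee_fin -aA; apply: nneseries_ge0 => i _ _; rewrite lee_fin.
elim: m => [|m IH].
  by rewrite expr0 mulr1 mul1e; apply: eq_eseriesr => j _; rewrite conv_pow1.
rewrite [LHS](nneseries_cauchy_product_mean a (conv_pow a m.+1))//; last first.
  by move=> i; exact: conv_pow_ge0.
rewrite IH (nneseries_conv_pow _ _ _ a0 aA) aA muleA -EFinM [X in X + _]muleC.
rewrite -ge0_muleDl ?lee_fin ?exprn_ge0 ?mulr_ge0 ?exprn_ge0//.
by congr (_ * _); congr EFin; rewrite !exprS; ring.
Qed.

(* With [c = exp (- A)], the total mass and the mean of a compound Poisson law. *)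
Lemma compound_poisson_mass a A c : (forall i, (0 <= a i)%R) -> a 0%N = 0%R ->
  \sum_(i <oo) (a i)%:E = A%:E -> (0 <= c)%R ->
  \sum_(j <oo) (\sum_(m < j.+1) c / (m`!)%:R * conv_pow a m j)%:E =
  (c * expR A)%:E.
Proof.
move=> a0 a00 aA c0.
have A0 : (0 <= A)%R.
  by rewrite -lee_fin -aA; apply: nneseries_ge0 => i _ _; rewrite lee_fin.
have t0 m j : (0 <= c / (m`!)%:R * conv_pow a m j)%R.
  by rewrite mulr_ge0 ?divr_ge0// conv_pow_ge0.
transitivity (\sum_(j <oo) \sum_(m <oo) (c / (m`!)%:R * conv_pow a m j)%:E).
  apply: eq_eseriesr => j _; rewrite -sumEFin (nneseries_truncate _ j.+1)//.
  - by move=> m; rewrite lee_fin.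
  - by move=> m jm; rewrite conv_pow_eq0 ?mulr0.
rewrite nneseries_interchange; last by move=> *; rewrite lee_fin.
transitivity (\sum_(m <oo) (c%:E * ((A ^+ m) / (m`!)%:R)%:E)).
  apply: eq_eseriesr => m _; under eq_eseriesr do rewrite EFinM.
  rewrite nneseriesZl; last by move=> j _; rewrite lee_fin conv_pow_ge0.
  by rewrite (nneseries_conv_pow _ _ _ a0 aA) -!EFinM; congr EFin; ring.
rewrite nneseriesZl ?expR_eseries// => m _.
by rewrite lee_fin divr_ge0// exprn_ge0.
Qed.

Lemma compound_poisson_mean a A c : (forall i, (0 <= a i)%R) -> a 0%N = 0%R ->
  \sum_(i <oo) (a i)%:E = A%:E -> (0 <= c)%R ->
  \sum_(j <oo) (j%:R * \sum_(m < j.+1) c / (m`!)%:R * conv_pow a m j)%:E =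
  (c * expR A)%:E * \sum_(i <oo) (i%:R * a i)%:E.
Proof.
move=> a0 a00 aA c0.
have A0 : (0 <= A)%R.
  by rewrite -lee_fin -aA; apply: nneseries_ge0 => i _ _; rewrite lee_fin.
have t0 m (j : nat) : (0 <= c / (m`!)%:R * (j%:R * conv_pow a m j))%R.
  by rewrite mulr_ge0 ?divr_ge0// mulr_ge0// conv_pow_ge0.
transitivity (\sum_(j <oo) \sum_(m <oo)
                 (c / (m`!)%:R * (j%:R * conv_pow a m j))%:E).
  apply: eq_eseriesr => j _; rewrite mulr_sumr -sumEFin.
  rewrite (nneseries_truncate _ j.+1)//.
  - by apply: eq_bigr => m _; congr EFin; ring.
  - by move=> m; rewrite lee_fin.
  - by move=> m jm; rewrite conv_pow_eq0 ?mulr0.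
rewrite nneseries_interchange; last by move=> *; rewrite lee_fin.
rewrite nneseries_shift; last 2 first.
- by move=> m; apply: nneseries_ge0 => j _ _; rewrite lee_fin.
- by rewrite eseries0// => -[|j] _ _ /=; rewrite ?mul0r ?mulr0.
transitivity (\sum_(m <oo) ((c * (A ^+ m / (m`!)%:R))%:E *
                            \sum_(i <oo) (i%:R * a i)%:E)).
  apply: eq_eseriesr => m _; under eq_eseriesr do rewrite EFinM.
  rewrite nneseriesZl; last by move=> j _; rewrite lee_fin mulr_ge0// conv_pow_ge0.
  rewrite (nneseries_mean_conv_pow _ _ _ a0 aA) muleA -EFinM.
  congr (EFin _ * _); rewrite factS natrM; field.
  by rewrite pnatr_eq0 -lt0n fact_gt0/= nat1r pnatr_eq0.
rewrite nneseriesMr; last 2 first.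
- by move=> m; rewrite lee_fin mulr_ge0// divr_ge0// exprn_ge0.
- by apply: nneseries_ge0 => i _ _; rewrite lee_fin mulr_ge0.
congr (_ * _); under eq_eseriesr do rewrite EFinM.
by rewrite nneseriesZl ?expR_eseries// => m _; rewrite lee_fin divr_ge0// exprn_ge0.
Qed.

End ConvolutionPowers.

Class ProbKernel {R : realType} {d : measure_display} {S : measurableType d}
  (mu : {measure set S -> \bar R}) (kap : S -> S -> R) : Prop := {
  mu_setT : mu setT = 1%E;
  kap_ge0 : forall x y, 0 <= kap x y;
  kap_measurable : measurable_fun setT (fun p : S * S => kap p.1 p.2);
  kap_section_finite : forall x, (\int[mu]_y (kap x y)%:E < +oo)%E }.

Class Density {R : realType} {d : measure_display} {S : measurableType d}
  (w : S -> R) : Prop := {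
  density_ge0 : forall y, 0 <= w y;
  density_le1 : forall y, w y <= 1;
  density_measurable : measurable_fun setT w }.

Section BranchingProcessTheory.
Context {R : realType} {d : measure_display} {S : measurableType d}.
Context {mu : {measure set S -> \bar R}} {kap : S -> S -> R}.
Context {Hk : ProbKernel mu kap} {w : S -> R} {Hw : Density w}.
Let mu1 : mu setT = 1%E := mu_setT.
Let k0 : forall x y, 0 <= kap x y := kap_ge0.
Let km : measurable_fun setT (fun p : S * S => kap p.1 p.2) := kap_measurable.
Let w0 : forall y, 0 <= w y := density_ge0.
Let w1 : forall y, w y <= 1 := density_le1.
Let wm : measurable_fun setT w := density_measurable.

(* [mu] seen as a probability, to make Fubini--Tonelli available *)
Definition prob_mu := (mu : set S -> \bar R).
HB.instance Definition _ := Measure.on prob_mu.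
HB.instance Definition _ := Measure_isProbability.Build _ _ _ prob_mu mu1.

Local Notation T := (bp_trunc mu kap w).
Local Notation lam := (bp_lam mu kap w).

Lemma measurable_kap_section x : measurable_fun setT (kap x).
Proof. exact: measurable_fun_pair2 x km. Qed.

Lemma integrable_kap_dominated x (h : S -> R) : measurable_fun setT h ->
  (forall y, 0 <= h y <= kap x y) -> mu.-integrable setT (EFin \o h).
Proof.
move=> mh hb; have ik : mu.-integrable setT (EFin \o kap x).
  apply/integrableP; split; first exact/measurable_EFinP/measurable_kap_section.
  rewrite (eq_integral (fun y => (kap x y)%:E)) ?kap_section_finite// => y _.
  by rewrite /comp abse_EFin ger0_norm.
apply: le_integrable ik => //; first exact/measurable_EFinP.
move=> y _; rewrite /comp !abse_EFin lee_fin.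
by case/andP: (hb y) => h0 hk; rewrite !ger0_norm.
Qed.

Lemma Rintegral_kap_dominatedE x (h : S -> R) : measurable_fun setT h ->
  (forall y, 0 <= h y <= kap x y) ->
  (Rintegral mu setT h)%:E = (\int[mu]_y (h y)%:E)%E.
Proof.
move=> mh hb; rewrite /Rintegral fineK//.
by apply: integrable_fin_num => //; exact: integrable_kap_dominated mh hb.
Qed.

Lemma measurable_Rintegral_section (F : S -> S -> R) :
  measurable_fun setT (fun p : S * S => F p.1 p.2) -> (forall x y, 0 <= F x y) ->
  measurable_fun setT (fun x => Rintegral mu setT (F x)).
Proof.
move=> mF F0; apply: (measurableT_comp (f := fine)) => //.
exact: (measurable_fun_fubini_tonelli_F (m2 := prob_mu) (fun p => (F p.1 p.2)%:E)
  ((measurable_EFinP _ _).2 mF) (fun p => F0 p.1 p.2)).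
Qed.

Lemma measurable_kapw_section x (g : S -> R) : measurable_fun setT g ->
  measurable_fun setT (fun y => kap x y * w y * g y).
Proof.
move=> mg; apply: measurable_funM => //.
by apply: measurable_funM => //; exact: measurable_kap_section.
Qed.

Lemma kapw_dominated x y (g : R) : 0 <= g <= 1 -> 0 <= kap x y * w y * g <= kap x y.
Proof.
case/andP=> g0 g1; rewrite !mulr_ge0//= -[leRHS]mulr1 -mulrA ler_wpM2l//.
by rewrite -[leRHS]mulr1 ler_pM.
Qed.

Lemma measurable_bp_lam : measurable_fun setT lam.
Proof.
apply: (measurable_Rintegral_section (fun x y => kap x y * w y)).
- by apply: measurable_funM => //; exact: measurableT_comp wm measurable_snd.
- by move=> x y; rewrite mulr_ge0.
Qed.

Lemma bp_lamE x : (lam x)%:E = (\int[mu]_y (kap x y * w y)%:E)%E.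
Proof.
rewrite (@Rintegral_kap_dominatedE x)//.
- by apply: measurable_funM => //; exact: measurable_kap_section.
- by move=> y; rewrite -[X in _ <= X <= _]mulr1 kapw_dominated// ler01 lexx.
Qed.

(* expected number of children of [x] whose truncated progeny [Y_n] equals [i] *)
Definition child_mass n x i := Rintegral mu setT (fun y => kap x y * w y * T n y i).

Lemma bp_trunc_succ n x j : T n.+1 x j.+1 =
  \sum_(m < j.+1) expR (- lam x) / (m`!)%:R * conv_pow (child_mass n x) m j.
Proof. by []. Qed.

Lemma bp_trunc_at0 n x : T n x 0 = 0.
Proof. by case: n. Qed.

Lemma bp_trunc_ge0 n x k : 0 <= T n x k.
Proof.
elim: n x k => [|n IH] x [|j] //=; rewrite ?ler0n//.
apply: sumr_ge0 => m _; rewrite mulr_ge0 ?divr_ge0 ?expR_ge0 ?ler0n//.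
by apply: conv_pow_ge0 => i; apply: Rintegral_ge0 => y _; rewrite !mulr_ge0.
Qed.

Lemma child_mass_ge0 n x i : 0 <= child_mass n x i.
Proof. by apply: Rintegral_ge0 => y _; rewrite !mulr_ge0// bp_trunc_ge0. Qed.

Lemma child_mass_at0 n x : child_mass n x 0 = 0.
Proof.
rewrite /child_mass; under eq_Rintegral do rewrite bp_trunc_at0 mulr0.
by rewrite /Rintegral integral0.
Qed.

Lemma measurable_conv_pow (a : S -> nat -> R) m j :
  (forall i, measurable_fun setT (fun x => a x i)) ->
  measurable_fun setT (fun x => conv_pow (a x) m j).
Proof.
move=> ma; elim: m j => [|m IH] j /=; first exact: measurable_cst.
by apply: measurable_sum => i; apply: measurable_funM.
Qed.

Lemma measurable_bp_trunc n k : measurable_fun setT (fun x => T n x k).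
Proof.
elim: n k => [|n IH] [|j]; try exact: measurable_cst.
rewrite (funext (bp_trunc_succ n ^~ j)); apply: measurable_sum => m.
apply: measurable_funM.
  apply: measurable_funM => //.
  exact: measurableT_comp (@measurable_expR R) (measurable_funN measurable_bp_lam).
apply: measurable_conv_pow => i.
apply: (measurable_Rintegral_section (fun x y => kap x y * w y * T n y i)).
  apply: measurable_funM; first apply: measurable_funM => //.
  - exact: measurableT_comp wm measurable_snd.
  - exact: measurableT_comp (IH i) measurable_snd.
by move=> x y; rewrite !mulr_ge0// bp_trunc_ge0.
Qed.

Local Open Scope ereal_scope.

Lemma nneseries_kapw_integral x (g : nat -> S -> R) (c : nat -> R) :
  (forall i y, (0 <= g i y)%R) -> (forall i, measurable_fun setT (g i)) ->
  (forall i, (0 <= c i)%R) ->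
  \sum_(i <oo) ((c i)%:E * \int[mu]_y (kap x y * w y * g i y)%:E) =
  \int[mu]_y ((kap x y * w y)%:E * \sum_(i <oo) (c i * g i y)%:E).
Proof.
move=> g0 mg c0.
have mkw : measurable_fun setT (fun y => kap x y * w y)%R.
  by apply: measurable_funM => //; exact: measurable_kap_section.
transitivity (\sum_(i <oo) \int[mu]_y ((kap x y * w y)%:E * (c i * g i y)%:E)).
  apply: eq_eseriesr => i _; rewrite -ge0_integralZl_EFin//.
  - by apply: eq_integral => y _; rewrite -!EFinM; congr EFin; ring.
  - by move=> y _; rewrite lee_fin !mulr_ge0.
  - exact/measurable_EFinP/measurable_kapw_section.
rewrite -integral_nneseries//.
- apply: eq_integral => y _; rewrite nneseriesZl// => i _.
  by rewrite lee_fin mulr_ge0.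
- by move=> i; apply/measurable_EFinP/measurable_funM => //; exact: measurable_funM.
- by move=> i y _; rewrite lee_fin !mulr_ge0.
Qed.

Lemma child_massE n x i : (forall y k, (T n y k <= 1)%R) ->
  (child_mass n x i)%:E = \int[mu]_y (kap x y * w y * T n y i)%:E.
Proof.
move=> T1; rewrite (@Rintegral_kap_dominatedE x)//.
- exact: measurable_kapw_section (measurable_bp_trunc n i).
- by move=> y; rewrite kapw_dominated// bp_trunc_ge0 T1.
Qed.

Lemma nneseries_child_mass n x : (forall y, \sum_(k <oo) (T n y k)%:E = 1) ->
  \sum_(i <oo) (child_mass n x i)%:E = (lam x)%:E.
Proof.
move=> Tn1; have T1 y k : (T n y k <= 1)%R.
  rewrite -lee_fin -(Tn1 y); apply: (nneseries_ge_term (fun k => (T n y k)%:E)).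
  by move=> i; rewrite lee_fin bp_trunc_ge0.
transitivity (\sum_(i <oo) (1%:E * \int[mu]_y (kap x y * w y * T n y i)%:E)).
  by apply: eq_eseriesr => i _; rewrite mul1e child_massE.
rewrite (nneseries_kapw_integral _ _ (fun=> 1%R))//; last first.
- exact: measurable_bp_trunc.
- by move=> i y; exact: bp_trunc_ge0.
rewrite bp_lamE; apply: eq_integral => y _.
by under eq_eseriesr do rewrite mul1r; rewrite Tn1 mule1.
Qed.

Lemma bp_trunc_sum n x : \sum_(k <oo) (T n x k)%:E = 1.
Proof.
elim: n x => [|n IH] x.
  rewrite (nneseries_truncate _ 2).
  - by rewrite big_ord_recr/= big_ord1/= add0e.
  - by move=> k; rewrite lee_fin ler0n.
  - by move=> [|[|k]].
rewrite nneseries_shift ?bp_trunc_at0// => [|k]; last by rewrite lee_fin bp_trunc_ge0.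
under eq_eseriesr do rewrite bp_trunc_succ.
rewrite (compound_poisson_mass _ (lam x) _ (child_mass_ge0 n x) (child_mass_at0 n x)).
- by rewrite expRN mulVf// gt_eqF// expR_gt0.
- exact: nneseries_child_mass.
- exact: expR_ge0.
Qed.

Lemma bp_trunc_le1 n y k : (T n y k <= 1)%R.
Proof.
rewrite -lee_fin -(bp_trunc_sum n y).
by apply: (nneseries_ge_term (fun k => (T n y k)%:E)) => i; rewrite lee_fin bp_trunc_ge0.
Qed.

Fixpoint kap_iter (j : nat) : S -> \bar R :=
  match j with
  | 0 => fun _ => 1
  | j'.+1 => fun x => \int[mu]_y ((kap x y)%:E * kap_iter j' y * (w y)%:E)
  end.

Lemma kap_iter_ge0 j x : 0 <= kap_iter j x.
Proof.
elim: j x => [|j IH] x /=; first by rewrite lee01.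
by apply: integral_ge0 => y _; rewrite !mule_ge0// lee_fin.
Qed.

Lemma measurable_kap_iter j : measurable_fun setT (kap_iter j).
Proof.
elim: j => [|j IH] /=; first exact: measurable_cst.
have mf : measurable_fun setT
    (fun p : S * S => (kap p.1 p.2)%:E * kap_iter j p.2 * (w p.2)%:E).
  apply: emeasurable_funM; first apply: emeasurable_funM.
  - exact/measurable_EFinP.
  - exact: measurableT_comp IH measurable_snd.
  - by apply/measurable_EFinP; exact: measurableT_comp wm measurable_snd.
apply: (measurable_fun_fubini_tonelli_F (m2 := prob_mu) _ mf) => p.
by rewrite !mule_ge0 ?lee_fin ?kap_iter_ge0.
Qed.

Lemma nneseries_ge_kap_iter K x :
  \sum_(j < K) kap_iter j x <= \sum_(j <oo) kap_iter j x.
Proof.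
have := @nneseries_lim_ge R (kap_iter^~ x) xpredT 0%N K (fun j _ _ => kap_iter_ge0 j x).
by rewrite big_mkord.
Qed.

Lemma bp_trunc_mean n x :
  \sum_(k <oo) (k%:R * T n x k)%:E = \sum_(j < n.+1) kap_iter j x.
Proof.
elim: n x => [|n IH] x.
  rewrite big_ord1 (nneseries_truncate _ 2).
  - by rewrite big_ord_recr/= big_ord1/= mul0r add0e mul1r.
  - by move=> k; rewrite lee_fin mulr_ge0 ?ler0n.
  - by move=> [|[|k]] //= _; rewrite mulr0.
rewrite nneseries_shift ?mul0r// => [|k]; last by rewrite lee_fin mulr_ge0 ?bp_trunc_ge0.
transitivity (\sum_(j <oo) ((T n.+1 x j.+1)%:E + (j%:R * T n.+1 x j.+1)%:E)).
  by apply: eq_eseriesr => j _; rewrite -EFinD -natr1 mulrDl mul1r addrC.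
rewrite nneseriesD; last 2 first.
- by move=> j _ _; rewrite lee_fin bp_trunc_ge0.
- by move=> j _ _; rewrite lee_fin mulr_ge0 ?bp_trunc_ge0.
have -> : \sum_(j <oo) (T n.+1 x j.+1)%:E = 1.
  rewrite -(bp_trunc_sum n.+1 x) [RHS]nneseries_shift ?bp_trunc_at0// => k.
  by rewrite lee_fin bp_trunc_ge0.
under eq_eseriesr do rewrite bp_trunc_succ.
rewrite (compound_poisson_mean _ (lam x) _ (child_mass_ge0 n x) (child_mass_at0 n x))
  ?nneseries_child_mass ?expR_ge0// => [|y]; last exact: bp_trunc_sum.
rewrite expRN mulVf ?gt_eqF ?expR_gt0// mul1e big_ord_recl/=; congr (_ + _).
transitivity (\sum_(i <oo) ((i%:R)%:E * \int[mu]_y (kap x y * w y * T n y i)%:E)).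
  by apply: eq_eseriesr => i _; rewrite EFinM child_massE// => y k; exact: bp_trunc_le1.
rewrite (nneseries_kapw_integral _ _ (fun i => i%:R))//; last first.
- exact: measurable_bp_trunc.
- by move=> i y; exact: bp_trunc_ge0.
transitivity (\int[mu]_y (\sum_(j < n.+1) ((kap x y * w y)%:E * kap_iter j y))).
  apply: eq_integral => y _.
  by rewrite IH ge0_sume_distrr// => j _; exact: kap_iter_ge0.
rewrite ge0_integral_sum//; last 2 first.
- move=> j; apply: emeasurable_funM; last exact: measurable_kap_iter.
  by apply/measurable_EFinP/measurable_funM => //; exact: measurable_kap_section.
- by move=> j y _; rewrite mule_ge0 ?kap_iter_ge0// lee_fin mulr_ge0.
by apply: eq_bigr => j _; apply: eq_integral => y _; rewrite EFinM muleAC.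
Qed.

Lemma bp_trunc_succ_stable n x i : (i <= n)%N -> T n.+1 x i = T n x i.
Proof.
elim: n x i => [|n IH] x [|j] jn; rewrite ?bp_trunc_at0//.
rewrite !bp_trunc_succ; apply: eq_bigr => m _; congr (_ * _)%R.
apply: eq_conv_pow => i ij; rewrite /child_mass.
by congr (Rintegral _ _ _); apply/funext => y; rewrite IH// (leq_trans ij).
Qed.

(* [Y_n(x) = i] only involves the first [i] generations. *)
Lemma bp_trunc_stable n x i : (i <= n)%N -> T n x i = T i x i.
Proof.
elim: n => [|n IH]; first by rewrite leqn0 => /eqP->.
rewrite leq_eqVlt => /orP[/eqP->//|]; rewrite ltnS => h.
by rewrite bp_trunc_succ_stable// IH.
Qed.

Lemma bp_size_pmfE x k : bp_size_pmf mu kap w x k = T k x k.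
Proof.
apply: lim_near_cst; first exact: norm_hausdorff.
by apply: filterS (nbhs_infty_ge k) => n kn; exact: bp_trunc_stable.
Qed.

Lemma bp_trunc_diag_succ x j : T j.+1 x j.+1 =
  (\sum_(m < j.+1) expR (- lam x) / (m`!)%:R *
     conv_pow (fun i => child_mass i x i) m j)%R.
Proof.
rewrite bp_trunc_succ; apply: eq_bigr => m _; congr (_ * _)%R.
apply: eq_conv_pow => i ij; rewrite /child_mass.
by congr (Rintegral _ _ _); apply/funext => y; rewrite (bp_trunc_stable _ y _ ij).
Qed.

Lemma bp_finite_prob_sum x : bp_finite_prob mu kap w x = \sum_(k <oo) (T k x k)%:E.
Proof. by apply: eq_eseriesr => k _; rewrite bp_size_pmfE. Qed.

Lemma bp_Efin_sum x : bp_Efin mu kap w x = \sum_(k <oo) (k%:R * T k x k)%:E.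
Proof. by apply: eq_eseriesr => k _; rewrite bp_size_pmfE. Qed.

Lemma bp_finite_prob_le1 x : bp_finite_prob mu kap w x <= 1.
Proof.
rewrite bp_finite_prob_sum; apply: lime_le.
  by apply: is_cvg_nneseries => k _; rewrite lee_fin bp_trunc_ge0.
apply: nearW => K /=; rewrite -(bp_trunc_sum K x).
apply: le_trans (nneseries_lim_ge K _) => [|k _ _]; last by rewrite lee_fin bp_trunc_ge0.
rewrite le_eqVlt; apply/orP; left; apply/eqP.
by apply: eq_big_nat => k /andP[_ kK]; rewrite (bp_trunc_stable _ _ _ (ltnW kK)).
Qed.

Lemma bp_Efin_le_kap_iter x :
  bp_Efin mu kap w x <= \sum_(j <oo) kap_iter j x.
Proof.
rewrite bp_Efin_sum; apply: lime_le.
  by apply: is_cvg_nneseries => k _; rewrite lee_fin mulr_ge0 ?bp_trunc_ge0.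
apply: nearW => K /=; apply: le_trans (nneseries_ge_kap_iter K.+1 x).
rewrite -bp_trunc_mean.
apply: le_trans (nneseries_lim_ge K _) => [|k _ _]; last first.
  by rewrite lee_fin mulr_ge0 ?bp_trunc_ge0.
rewrite le_eqVlt; apply/orP; left; apply/eqP.
by apply: eq_big_nat => k /andP[_ kK]; rewrite (bp_trunc_stable _ _ _ (ltnW kK)).
Qed.

Definition fin_prob x := fine (bp_finite_prob mu kap w x).

Lemma bp_finite_prob_ge0 x : 0 <= bp_finite_prob mu kap w x.
Proof. by apply: nneseries_ge0 => k _ _; rewrite bp_size_pmfE lee_fin bp_trunc_ge0. Qed.

Lemma bp_finite_probE x : bp_finite_prob mu kap w x = (fin_prob x)%:E.
Proof.
rewrite /fin_prob fineK// ge0_fin_numE ?bp_finite_prob_ge0//.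
exact: le_lt_trans (bp_finite_prob_le1 x) (ltry _).
Qed.

Lemma fin_prob_ge0 x : (0 <= fin_prob x)%R.
Proof. by rewrite -lee_fin -bp_finite_probE bp_finite_prob_ge0. Qed.

Lemma fin_prob_le1 x : (fin_prob x <= 1)%R.
Proof. by rewrite -lee_fin -bp_finite_probE bp_finite_prob_le1. Qed.

Lemma measurable_fin_prob : measurable_fun setT fin_prob.
Proof.
apply: (measurableT_comp (f := fine)) => //.
rewrite (funext bp_finite_prob_sum); apply: ge0_emeasurable_sum.
- by move=> k y _ _; rewrite lee_fin bp_trunc_ge0.
- by move=> k _; apply/measurable_EFinP; exact: measurable_bp_trunc.
Qed.

Lemma nneseries_child_mass_diag x : \sum_(i <oo) (child_mass i x i)%:E =
  (Rintegral mu setT (fun y => kap x y * w y * fin_prob y))%:E.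
Proof.
transitivity (\sum_(i <oo) (1%:E * \int[mu]_y (kap x y * w y * T i y i)%:E)).
  by apply: eq_eseriesr => i _; rewrite mul1e child_massE// => y k; exact: bp_trunc_le1.
rewrite (nneseries_kapw_integral _ (fun i y => T i y i) (fun=> 1%R))//; last first.
- by move=> i; exact: measurable_bp_trunc.
- by move=> i y; exact: bp_trunc_ge0.
rewrite (@Rintegral_kap_dominatedE x)//; last 2 first.
- exact: measurable_kapw_section measurable_fin_prob.
- by move=> y; rewrite kapw_dominated// fin_prob_ge0 fin_prob_le1.
apply: eq_integral => y _; under eq_eseriesr do rewrite mul1r.
by rewrite -bp_finite_prob_sum bp_finite_probE -EFinM.
Qed.

Lemma bp_finite_prob_fixpoint x : bp_finite_prob mu kap w x =
  (expR (- lam x) * expR (Rintegral mu setT (fun y => kap x y * w y * fin_prob y)))%:E.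
Proof.
rewrite bp_finite_prob_sum nneseries_shift ?bp_trunc_at0// => [|k]; last first.
  by rewrite lee_fin bp_trunc_ge0.
under eq_eseriesr do rewrite bp_trunc_diag_succ.
rewrite (compound_poisson_mass _ _ _ _ _ (nneseries_child_mass_diag x)) ?expR_ge0//.
- by move=> i; exact: child_mass_ge0.
- exact: child_mass_at0.
Qed.

Lemma bp_Efin_ge0 x : 0 <= bp_Efin mu kap w x.
Proof.
by apply: nneseries_ge0 => k _ _; rewrite bp_size_pmfE lee_fin mulr_ge0 ?bp_trunc_ge0.
Qed.

Lemma measurable_bp_Efin : measurable_fun setT (bp_Efin mu kap w).
Proof.
rewrite (funext bp_Efin_sum); apply: ge0_emeasurable_sum.
- by move=> k y _ _; rewrite lee_fin mulr_ge0 ?bp_trunc_ge0.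
- move=> k _; apply/measurable_EFinP; apply: measurable_funM => //.
  exact: measurable_bp_trunc.
Qed.

Section AlmostSurelyFinite.
Hypothesis finite_as : forall x, bp_finite_prob mu kap w x = 1.

Lemma bp_Efin_fixpoint x : bp_Efin mu kap w x =
  1 + \int[mu]_y ((kap x y)%:E * bp_Efin mu kap w y * (w y)%:E).
Proof.
have q1 y : fin_prob y = 1%R by rewrite /fin_prob finite_as.
rewrite bp_Efin_sum nneseries_shift ?mul0r// => [|k]; last first.
  by rewrite lee_fin mulr_ge0 ?bp_trunc_ge0.
transitivity (\sum_(j <oo) ((T j.+1 x j.+1)%:E + (j%:R * T j.+1 x j.+1)%:E)).
  by apply: eq_eseriesr => j _; rewrite -EFinD -natr1 mulrDl mul1r addrC.
rewrite nneseriesD; last 2 first.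
- by move=> j _ _; rewrite lee_fin bp_trunc_ge0.
- by move=> j _ _; rewrite lee_fin mulr_ge0 ?bp_trunc_ge0.
have -> : \sum_(j <oo) (T j.+1 x j.+1)%:E = 1.
  rewrite -(finite_as x) bp_finite_prob_sum [RHS]nneseries_shift ?bp_trunc_at0// => k.
  by rewrite lee_fin bp_trunc_ge0.
under eq_eseriesr do rewrite bp_trunc_diag_succ.
rewrite (compound_poisson_mean _ _ _ _ _ (nneseries_child_mass_diag x)) ?expR_ge0//;
  last 2 first.
- by move=> i; exact: child_mass_ge0.
- exact: child_mass_at0.
have -> : Rintegral mu setT (fun y => kap x y * w y * fin_prob y)%R = lam x.
  by apply: eq_Rintegral => y _; rewrite q1 mulr1.
rewrite expRN mulVf ?gt_eqF ?expR_gt0// mul1e; congr (_ + _).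
transitivity (\sum_(i <oo) ((i%:R)%:E * \int[mu]_y (kap x y * w y * T i y i)%:E)).
  by apply: eq_eseriesr => i _; rewrite EFinM child_massE// => y k; exact: bp_trunc_le1.
rewrite (nneseries_kapw_integral _ (fun i y => T i y i) (fun i => i%:R))//; last first.
- by move=> i; exact: measurable_bp_trunc.
- by move=> i y; exact: bp_trunc_ge0.
by apply: eq_integral => y _; rewrite -bp_Efin_sum EFinM muleAC.
Qed.

Lemma kap_iter_partial_le_bp_Efin n x :
  \sum_(j < n) kap_iter j x <= bp_Efin mu kap w x.
Proof.
elim: n x => [|n IH] x; first by rewrite big_ord0 bp_Efin_ge0.
rewrite big_ord_recl bp_Efin_fixpoint leeD2l//=.
have mkx : measurable_fun setT (fun y => (kap x y)%:E).
  exact/measurable_EFinP/measurable_kap_section.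
rewrite [leLHS](_ : _ = \int[mu]_y \sum_(i < n)
                          ((kap x y)%:E * kap_iter i y * (w y)%:E)); last first.
  rewrite ge0_integral_sum// => [i|i y _]; last first.
    by rewrite !mule_ge0 ?lee_fin ?kap_iter_ge0.
  apply: emeasurable_funM; last exact/measurable_EFinP.
  exact: emeasurable_funM mkx (measurable_kap_iter i).
apply: ge0_le_integral => //.
- by move=> y _; apply: sume_ge0 => i _; rewrite !mule_ge0 ?lee_fin ?kap_iter_ge0.
- apply: emeasurable_sum => i; apply: emeasurable_funM; last exact/measurable_EFinP.
  exact: emeasurable_funM mkx (measurable_kap_iter i).
- apply: emeasurable_funM; last exact/measurable_EFinP.
  exact: emeasurable_funM mkx measurable_bp_Efin.
move=> y _; rewrite -ge0_sume_distrl => [|i _]; last first.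
  by rewrite mule_ge0 ?lee_fin ?kap_iter_ge0.
rewrite -ge0_sume_distrr => [|i _]; last exact: kap_iter_ge0.
by rewrite lee_wpmul2r ?lee_fin// lee_wpmul2l ?lee_fin.
Qed.

Lemma bp_Efin_kap_iter x : bp_Efin mu kap w x = \sum_(j <oo) kap_iter j x.
Proof.
apply/eqP; rewrite eq_le bp_Efin_le_kap_iter /=.
apply: lime_le; first by apply: is_cvg_nneseries => j *; exact: kap_iter_ge0.
by apply: nearW => K /=; rewrite big_mkord; exact: kap_iter_partial_le_bp_Efin.
Qed.

End AlmostSurelyFinite.

End BranchingProcessTheory.

#[export] Instance one_fun_density {R : realType} {d : measure_display}
  {S : measurableType d} : Density (@Defs.one_fun R d S).
Proof. by split=> [y|y|]; rewrite /Defs.one_fun ?ler01//; exact: measurable_cst. Qed.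

Section DualKernel.
Context {R : realType} {d : measure_display} {S : measurableType d}.
Context {mu : {measure set S -> \bar R}} {kap : S -> S -> R}.
Context {Hk : ProbKernel mu kap}.

Local Notation one := (@Defs.one_fun R d S).
Local Notation hw := (hat_w mu kap).

Lemma hat_wE : hw = fin_prob (mu := mu) (kap := kap) (w := one).
Proof. by apply/funext => x; rewrite /hat_w /rho_x /bp_rho subKr. Qed.

#[local] Instance hat_w_density : Density hw.
Proof.
rewrite hat_wE; split; [exact: fin_prob_ge0|exact: fin_prob_le1|].
exact: measurable_fin_prob.
Qed.

Lemma hat_w_fixpoint x :
  hw x = expR (- bp_lam mu kap one x) * expR (bp_lam mu kap hw x).
Proof.
apply: EFin_inj; rewrite {1}hat_wE -bp_finite_probE bp_finite_prob_fixpoint.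
congr (EFin (_ * expR _)); apply: eq_Rintegral => y _.
by rewrite hat_wE /Defs.one_fun mulr1.
Qed.

Lemma hat_w_gt0 x : 0 < hw x.
Proof. by rewrite hat_w_fixpoint mulr_gt0// expR_gt0. Qed.

(* The weight [hat_w y] of each child is absorbed by the induction hypothesis,
   and the Poisson factors [exp (- lam)] differ by [hat_w x] by [hat_w_fixpoint]. *)
Lemma dual_bp_trunc_diag k x :
  bp_trunc mu kap hw k x k * hw x = bp_trunc mu kap one k x k.
Proof.
have fix_lam y : expR (- bp_lam mu kap hw y) * hw y = expR (- bp_lam mu kap one y).
  by rewrite hat_w_fixpoint mulrCA -expRD addNr expR0 mulr1.
elim: k {-2}k (leqnn k) x => [|K IH] [|j] jK x; rewrite ?bp_trunc_at0 ?mul0r//.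
rewrite !bp_trunc_diag_succ mulr_suml; apply: eq_bigr => m _.
have -> : conv_pow (fun i => child_mass (mu := mu) (kap := kap) (w := hw) i x i) m j =
          conv_pow (fun i => child_mass (mu := mu) (kap := kap) (w := one) i x i) m j.
  apply: eq_conv_pow => i ij; apply: eq_Rintegral => y _.
  by rewrite /Defs.one_fun mulr1 -(IH i) ?(leq_trans ij)// mulrA mulrAC.
by rewrite -fix_lam [LHS]mulrAC [X in X * _ = _]mulrAC.
Qed.

Local Open Scope ereal_scope.

Lemma dual_bp_finite_prob x : bp_finite_prob mu kap hw x = 1.
Proof.
have hw0 := hat_w_gt0 x.
transitivity (\sum_(k <oo) (((hw x)^-1)%:E * (bp_trunc mu kap one k x k)%:E)).
  rewrite bp_finite_prob_sum; apply: eq_eseriesr => k _.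
  by rewrite -EFinM -dual_bp_trunc_diag mulrCA mulVf ?mulr1// gt_eqF.
rewrite nneseriesZl => [|k _]; last by rewrite lee_fin bp_trunc_ge0.
by rewrite -bp_finite_prob_sum bp_finite_probE -hat_wE -EFinM mulVf// gt_eqF.
Qed.

Lemma bp_Efin_dual x : bp_Efin mu kap one x = bp_Efin mu kap hw x * (hw x)%:E.
Proof.
rewrite !bp_Efin_sum -nneseriesMr; last 2 first.
- by move=> k; rewrite lee_fin mulr_ge0 ?bp_trunc_ge0.
- by rewrite lee_fin density_ge0.
by apply: eq_eseriesr => k _; rewrite -dual_bp_trunc_diag -EFinM mulrA.
Qed.

Lemma hatT_pow_kap_iter j :
  hatT_pow mu kap j = kap_iter (mu := mu) (kap := kap) (w := hw) j.
Proof. by elim: j => [|j IH] //=; rewrite IH. Qed.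

Lemma chi_hatE : chi_hat mu kap = \int[mu]_x (bp_Efin mu kap hw x * (hw x)%:E).
Proof. by apply: eq_integral => x _; rewrite bp_Efin_dual. Qed.

Lemma chi_hat_series : chi_hat mu kap =
  \sum_(j <oo) hat_inner mu kap (hatT_pow mu kap j) (fun _ => 1).
Proof.
have hw0 x : 0 <= (hw x)%:E by rewrite lee_fin density_ge0.
rewrite chi_hatE -integral_nneseries//; last 2 first.
- move=> j; rewrite hatT_pow_kap_iter; apply: emeasurable_funM.
    by apply: emeasurable_funM => //; exact: measurable_kap_iter.
  exact/measurable_EFinP/density_measurable.
- by move=> j x _; rewrite hatT_pow_kap_iter mule1 mule_ge0 ?kap_iter_ge0.
apply: eq_integral => x _; rewrite bp_Efin_kap_iter; last exact: dual_bp_finite_prob.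
rewrite -nneseriesMr//; last by move=> j; exact: kap_iter_ge0.
by apply: eq_eseriesr => j _; rewrite hatT_pow_kap_iter mule1.
Qed.

Lemma integrable_unit_valued (f : S -> R) : measurable_fun setT f ->
  (forall x, 0 <= f x <= 1)%R -> mu.-integrable setT (EFin \o f).
Proof.
move=> mf f01; apply: measurable_bounded_integrable => //.
  by rewrite mu_setT ltry.
exists 1%R; split=> // M M1 x _ /=; case/andP: (f01 x) => f0 f1.
by rewrite ger0_norm// (le_trans f1)// ltW.
Qed.

Lemma integrable_hat_w : mu.-integrable setT (EFin \o hw).
Proof.
apply: integrable_unit_valued density_measurable _ => x.
by rewrite density_ge0 density_le1.
Qed.

Lemma hat_mu_SE : hat_mu_S mu kap = 1 - rho_tot mu kap.
Proof.
have i1 : mu.-integrable setT (EFin \o (fun _ => 1%R : R)).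
  by apply: integrable_unit_valued => [|x]; [exact: measurable_cst|rewrite ler01 lexx].
have irho : mu.-integrable setT (EFin \o rho_x mu kap).
  have -> : rho_x mu kap = fun x => (1 - hw x)%R by apply/funext => x; rewrite subKr.
  apply: integrable_unit_valued => [|x].
    exact: measurable_funB (measurable_cst _) density_measurable.
  by rewrite subr_ge0 density_le1 lerBlDr lerDl density_ge0.
rewrite /hat_mu_S /rho_tot (eq_integral (fun x => (1 : R)%:E - (rho_x mu kap x)%:E)).
  by rewrite integralB_EFin// integral_cst// mu_setT mule1.
by move=> x _; rewrite EFinB.
Qed.

Lemma bp_E_dual x : bp_E mu kap hw x = bp_Efin mu kap hw x.
Proof.
by rewrite /bp_E /bp_rho dual_bp_finite_prob subrr eqxx adde0.
Qed.

Lemma hat_mu_S_chi_dual : 0 < hat_mu_S mu kap ->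
  hat_mu_S mu kap * chi_dual mu kap = \int[mu]_x (bp_Efin mu kap hw x * (hw x)%:E).
Proof.
move=> hpos; have hfin : hat_mu_S mu kap \is a fin_num.
  exact: integrable_fin_num integrable_hat_w.
rewrite /chi_dual /bp_chi -/(hat_mu_S mu kap) muleA -{1}(fineK hfin) -EFinM mulfV.
  by rewrite mul1e; apply: eq_integral => x _; rewrite bp_E_dual muleC.
by rewrite gt_eqF// fine_gt0// hpos ltey_eq hfin.
Qed.

End DualKernel.

Theorem lemma3p2 (R : realType) (d : measure_display) (S : measurableType d)
  (mu : {measure set S -> \bar R}) (kap : S -> S -> R) :
  mu setT = 1%E ->
  (forall x y, 0 <= kap x y) ->
  (forall x y, kap x y = kap y x) ->
  measurable_fun setT (fun p : S * S => kap p.1 p.2) ->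
  (mu \x mu)%E.-integrable setT (fun p : S * S => (kap p.1 p.2)%:E) ->
  (forall x, (\int[mu]_y (kap x y)%:E < +oo)%E) ->
  chi_hat mu kap
    = (\sum_(0 <= j <oo) hat_inner mu kap (hatT_pow mu kap j) (fun _ => 1%E))%E
  /\ ((0 < hat_mu_S mu kap)%E ->
      chi_hat mu kap = (hat_mu_S mu kap * chi_dual mu kap)%E
      /\ (hat_mu_S mu kap * chi_dual mu kap
          = (1 - rho_tot mu kap) * chi_dual mu kap)%E).
Proof.
move=> mu1 kap0 _ kapm _ kap_fin.
have Hk : ProbKernel mu kap by split.
split; first exact: chi_hat_series.
move=> hpos; rewrite hat_mu_S_chi_dual// chi_hatE; split=> //.
by rewrite -hat_mu_S_chi_dual// hat_mu_SE.
Qed.
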